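(* Let $\mathcal{L}$ be a nonempty set and $\mathcal{C}: 2^{\mathcal{L}}\to 2^{\mathcal{L}}$ a C-logics. For every $A\subseteq\mathcal{L}$, $\mathcal{C}(A)=\mathrm{Cn}(\mathcal{C}(A))=\mathcal{C}(\mathrm{Cn}(A))$.
   Context: A C-logics is a map $\mathcal{C}: 2^{\mathcal{L}}\to 2^{\mathcal{L}}$ satisfying Inclusion ($A\subseteq\mathcal{C}(A)$) and Cumulativity ($A\subseteq B\subseteq\mathcal{C}(A)\Rightarrow\mathcal{C}(A)=\mathcal{C}(B)$) for all $A,B\subseteq\mathcal{L}$. A theory is a set $T\subseteq\mathcal{L}$ with $\mathcal{C}(T)=T$. $\mathrm{Cn}(A)=\bigcap\{T : T\supseteq A,\ T\text{ a theory}\}$. *)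

From mathcomp Require Import all_boot.
From mathcomp Require Import boolp classical_sets.
Local Open Scope classical_set_scope.

Definition inclusion {L : Type} (C : set L -> set L) : Prop :=
  forall A : set L, A `<=` C A.

Definition cumulativity {L : Type} (C : set L -> set L) : Prop :=
  forall A B : set L, A `<=` B -> B `<=` C A -> C A = C B.

Definition C_logics {L : Type} (C : set L -> set L) : Prop :=
  inclusion C /\ cumulativity C.

Definition theory {L : Type} (C : set L -> set L) (T : set L) : Prop :=
  C T = T.

Definition Cn {L : Type} (C : set L -> set L) (A : set L) : set L :=
  \bigcap_(T in [set T | A `<=` T /\ theory C T]) T.

From mathcomp Require Import all_boot.
From mathcomp Require Import boolp classical_sets.
Local Open Scope classical_set_scope.

(* C(A) is a theory containing A, so it contains Cn(A), the least such
   theory; hence A <= Cn(A) <= C(A) and cumulativity gives C(Cn(A)) = C(A).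
   Being a theory, C(A) is also its own least theory extension Cn(C(A)). *)

Section ConsequenceOperator.

Variables (L : Type) (C : set L -> set L).

Lemma sub_Cn (A : set L) : A `<=` Cn C A.
Proof. by move=> x Ax T [AT _]; exact: AT. Qed.

Lemma Cn_sub_theory (A T : set L) : A `<=` T -> theory C T -> Cn C A `<=` T.
Proof. by move=> AT thT x; apply; split. Qed.

Lemma Cn_theory (T : set L) : theory C T -> Cn C T = T.
Proof.
by move=> thT; apply/seteqP; split; [exact: Cn_sub_theory | exact: sub_Cn].
Qed.

Hypotheses (C_incl : inclusion C) (C_cumul : cumulativity C).

Lemma theory_C (A : set L) : theory C (C A).
Proof. by rewrite /theory -(C_cumul _ _ (C_incl A)). Qed.

Lemma C_Cn (A : set L) : C (Cn C A) = C A.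
Proof.
apply/esym/C_cumul; first exact: sub_Cn.
exact: Cn_sub_theory (C_incl A) (theory_C A).
Qed.

End ConsequenceOperator.

Theorem lemma10 (L : Type) (L_nonempty : inhabited L) (C : set L -> set L)
  (HC : C_logics C) :
  forall A : set L, C A = Cn C (C A) /\ C A = C (Cn C A).
Proof.
move=> A; case: HC => C_incl C_cumul.
split; first by rewrite Cn_theory //; exact: theory_C.
by rewrite C_Cn.
Qed.
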